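(* Under the hypotheses and notation of the HNAG method (Algorithm 1) for $f\in\mathcal S^{1,1}_{\mu,L}$ with minimizer $x^*$, the iterates satisfy \[ \sum_{i=0}^{\infty}\frac{1}{\lambda_i}\|\nabla f(x_i)\|^2\leqslant 2L\mathcal L_0,\qquad \min_{0\leqslant i\leqslant k}\|\nabla f(x_i)\|^2\leqslant\frac{2L\mathcal L_0}{\sum_{i=0}^k 1/\lambda_i},\qquad \|\nabla f(x_k)\|^2\leqslant 2L\mathcal L_0\lambda_k\ \ \forall k\geqslant0 . \]
   Context: $V$ is a real Hilbert space; $\mathcal S^{1,1}_{\mu,L}$ ($\mu\geqslant0$) is the set of continuously differentiable $\mu$-convex functions with $L$-Lipschitz gradient, where $\mu$-convex means $f(x)-f(y)-(p,x-y)\geqslant\frac\mu2\|x-y\|^2$ for all $x,y$, $p\in\partial f(y)$. Algorithm 1: given $\gamma_0>0$, $x_0,v_0\in V$, for $k\geqslant0$ set $\alpha_k=\sqrt{\gamma_k/L}$, $\beta_k=1/(L\alpha_k)$, $x_{k+1}=\frac{x_k+\alpha_kv_k-\alpha_k\beta_k\nabla f(x_k)}{1+\alpha_k}$, $v_{k+1}=\frac{\gamma_kv_k+\mu\alpha_kx_{k+1}-\alpha_k\nabla f(x_{k+1})}{\gamma_k+\mu\alpha_k}$, $\gamma_{k+1}=\frac{\gamma_k+\mu\alpha_k}{1+\alpha_k}$. Further $\lambda_0=1$, $\lambda_k=\prod_{i=0}^{k-1}(1+\alpha_i)^{-1}$, and $\mathcal L_0=f(x_0)-f(x^* )+\frac{\gamma_0}{2}\|v_0-x^*\|^2$.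 *)

From Stdlib Require Import Reals Lra.
Open Scope R_scope.

Record Hilbert := {
  hV :> Type;
  hzero : hV;
  hadd : hV -> hV -> hV;
  hopp : hV -> hV;
  hscal : R -> hV -> hV;
  hinner : hV -> hV -> R;
  hadd_assoc : forall x y z, hadd x (hadd y z) = hadd (hadd x y) z;
  hadd_comm : forall x y, hadd x y = hadd y x;
  hadd_0 : forall x, hadd x hzero = x;
  hadd_opp : forall x, hadd x (hopp x) = hzero;
  hscal_1 : forall x, hscal 1 x = x;
  hscal_assoc : forall a b x, hscal a (hscal b x) = hscal (a * b) x;
  hscal_distr_v : forall a x y, hscal a (hadd x y) = hadd (hscal a x) (hscal a y);
  hscal_distr_r : forall a b x, hscal (a + b) x = hadd (hscal a x) (hscal b x);
  hinner_sym : forall x y, hinner x y = hinner y x;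
  hinner_add_l : forall x y z, hinner (hadd x y) z = hinner x z + hinner y z;
  hinner_scal_l : forall a x y, hinner (hscal a x) y = a * hinner x y;
  hinner_pos : forall x, 0 <= hinner x x;
  hinner_def : forall x, hinner x x = 0 -> x = hzero;
  hcomplete : forall u : nat -> hV,
    (forall eps, eps > 0 -> exists N, forall m n, (m >= N)%nat -> (n >= N)%nat ->
        sqrt (hinner (hadd (u m) (hopp (u n))) (hadd (u m) (hopp (u n)))) < eps) ->
    exists l, forall eps, eps > 0 -> exists N, forall n, (n >= N)%nat ->
        sqrt (hinner (hadd (u n) (hopp l)) (hadd (u n) (hopp l))) < eps
}.

Arguments hzero {h}.
Arguments hadd {h}.
Arguments hopp {h}.
Arguments hscal {h}.
Arguments hinner {h}.

Definition hsub {V : Hilbert} (x y : V) : V := hadd x (hopp y).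
Definition hnorm {V : Hilbert} (x : V) : R := sqrt (hinner x x).

Definition is_gradient {V : Hilbert} (f : V -> R) (g : V -> V) : Prop :=
  forall x eps, eps > 0 -> exists delta, delta > 0 /\
    forall h : V, hnorm h < delta ->
      Rabs (f (hadd x h) - f x - hinner (g x) h) <= eps * hnorm h.

Definition continuous_map {V : Hilbert} (g : V -> V) : Prop :=
  forall x eps, eps > 0 -> exists delta, delta > 0 /\
    forall y : V, hnorm (hsub y x) < delta -> hnorm (hsub (g y) (g x)) < eps.

(* mu-convexity as in the paper, for a differentiable f: here the
   subdifferential at y is {grad f(y)}. *)
Definition mu_convex_grad {V : Hilbert} (mu : R) (f : V -> R) (g : V -> V) : Prop :=
  forall x y : V,
    f x - f y - hinner (g y) (hsub x y) >= mu / 2 * (hnorm (hsub x y)) ^ 2.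

Definition S11 {V : Hilbert} (mu L : R) (f : V -> R) (g : V -> V) : Prop :=
  is_gradient f g /\ continuous_map g /\
  (forall x y : V, hnorm (hsub (g x) (g y)) <= L * hnorm (hsub x y)) /\
  mu_convex_grad mu f g.

Definition hnag_step {V : Hilbert} (g : V -> V) (mu L : R)
    (s : V * V * R) : V * V * R :=
  let '(x, v, gam) := s in
  let alpha := sqrt (gam / L) in
  let beta := 1 / (L * alpha) in
  let x' := hscal (/ (1 + alpha))
              (hadd (hadd x (hscal alpha v)) (hscal (- (alpha * beta)) (g x))) in
  let v' := hscal (/ (gam + mu * alpha))
              (hadd (hadd (hscal gam v) (hscal (mu * alpha) x')) (hscal (- alpha) (g x'))) in
  let gam' := (gam + mu * alpha) / (1 + alpha) in
  (x', v', gam').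

Fixpoint hnag {V : Hilbert} (g : V -> V) (mu L gamma0 : R) (x0 v0 : V) (k : nat)
    : V * V * R :=
  match k with
  | O => (x0, v0, gamma0)
  | S k' => hnag_step g mu L (hnag g mu L gamma0 x0 v0 k')
  end.

Definition hnag_x {V : Hilbert} g mu L gamma0 (x0 v0 : V) k : V :=
  fst (fst (hnag g mu L gamma0 x0 v0 k)).
Definition hnag_gamma {V : Hilbert} g mu L gamma0 (x0 v0 : V) k : R :=
  snd (hnag g mu L gamma0 x0 v0 k).
Definition hnag_alpha {V : Hilbert} g mu L gamma0 (x0 v0 : V) k : R :=
  sqrt (hnag_gamma g mu L gamma0 x0 v0 k / L).

Fixpoint hnag_lambda {V : Hilbert} g mu L gamma0 (x0 v0 : V) (k : nat) : R :=
  match k with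
  | O => 1
  | S k' => hnag_lambda g mu L gamma0 x0 v0 k' / (1 + hnag_alpha g mu L gamma0 x0 v0 k')
  end.

Fixpoint min_upto (u : nat -> R) (k : nat) : R :=
  match k with
  | O => u O
  | S k' => Rmin (min_upto u k') (u (S k'))
  end.

(* The energy E_k = f(x_k) - min f + gamma_k / 2 |v_k - x^*|^2 contracts along the
   iteration up to a gradient term: (1 + alpha_k) E_{k+1} <= E_k - |grad f(x_k)|^2 / (2L).
   This combines mu-convexity at (x^*, x_{k+1}), the cocoercivity bound
   f(x) - f(y) - <grad f(y), x - y> >= |grad f(x) - grad f(y)|^2 / (2L) at (x_k, x_{k+1}),
   and an exact algebraic identity for the HNAG update.  Since
   lambda_{k+1} = lambda_k / (1 + alpha_k), the quantities E_k / lambda_k then telescope, and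
   E_k >= 0 bounds sum_i |grad f(x_i)|^2 / lambda_i by 2 L E_0 = 2 L L_0; the other two
   estimates are read off this sum. *)

From Stdlib Require Import Reals Lra Psatz.
Open Scope R_scope.

Section InnerProductAlgebra.
Context {V : Hilbert}.

Lemma hinner0l (z : V) : hinner hzero z = 0.
Proof. pose proof (hinner_add_l V hzero hzero z) as H. rewrite hadd_0 in H. lra. Qed.

Lemma hinner_oppl (x z : V) : hinner (hopp x) z = - hinner x z.
Proof.
  pose proof (hinner_add_l V x (hopp x) z) as H. rewrite hadd_opp, hinner0l in H. lra.
Qed.

Lemma hinner_addr (x y z : V) : hinner z (hadd x y) = hinner z x + hinner z y.
Proof. rewrite !(hinner_sym V z). apply hinner_add_l. Qed.

Lemma hinner_scalr a (x z : V) : hinner z (hscal a x) = a * hinner z x.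
Proof. rewrite !(hinner_sym V z). apply hinner_scal_l. Qed.

Lemma hinner_oppr (x z : V) : hinner z (hopp x) = - hinner z x.
Proof. rewrite !(hinner_sym V z). apply hinner_oppl. Qed.

Lemma hinner0r (z : V) : hinner z hzero = 0.
Proof. rewrite hinner_sym. apply hinner0l. Qed.

Lemma hnorm_sq (x : V) : hnorm x ^ 2 = hinner x x.
Proof. apply pow2_sqrt, hinner_pos. Qed.

Lemma hsub_eq0 (u w : V) : hinner (hsub u w) (hsub u w) = 0 -> u = w.
Proof.
  intro H. apply hinner_def in H. unfold hsub in H.
  rewrite <- (hadd_0 V u), <- (hadd_opp V w), (hadd_comm V w), hadd_assoc, H,
    hadd_comm, hadd_0.
  reflexivity.
Qed.

End InnerProductAlgebra.

(* Expands inner products of linear combinations into inner products of the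
   atoms and puts each pair of atoms in one fixed order, so that [ring]/[field]
   can finish. *)
Ltac hexpand :=
  unfold hsub in *;
  repeat rewrite ?hinner_add_l, ?hinner_addr, ?hinner_scal_l, ?hinner_scalr,
    ?hinner_oppl, ?hinner_oppr, ?hinner0l, ?hinner0r in *;
  repeat match goal with |- context [hinner ?a ?b] =>
    match goal with |- context [hinner b a] =>
      lazymatch a with b => fail | _ => rewrite (hinner_sym _ b a) end end end.

Lemma hinner_le_of_hnorm_le (V : Hilbert) (a b : V) (c : R) :
  0 < c -> hnorm a <= c * hnorm b -> hinner a b <= c * hinner b b.
Proof.
  intros Hc Hab.
  assert (Hsq : hinner a a <= c ^ 2 * hinner b b).
  { rewrite <- (hnorm_sq a), <- (hnorm_sq b).
    pose proof (sqrt_pos (hinner a a)). unfold hnorm in *. nra. }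
  pose proof (hinner_pos V (hsub a (hscal c b))) as Hpos.
  revert Hpos. hexpand. nra.
Qed.

Lemma hnorm_scal (V : Hilbert) (t : R) (d : V) : 0 <= t -> hnorm (hscal t d) = t * hnorm d.
Proof.
  intro Ht. unfold hnorm. rewrite hinner_scal_l, hinner_scalr, <- Rmult_assoc.
  rewrite sqrt_mult; [| nra | apply hinner_pos].
  rewrite <- Rsqr_def, sqrt_Rsqr by exact Ht. reflexivity.
Qed.

Definition lipschitz_map {V : Hilbert} (L : R) (g : V -> V) : Prop :=
  forall x y : V, hnorm (hsub (g x) (g y)) <= L * hnorm (hsub x y).

Lemma mu_convex_grad_0 (V : Hilbert) (mu : R) (f : V -> R) (g : V -> V) :
  0 <= mu -> mu_convex_grad mu f g -> mu_convex_grad 0 f g.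
Proof.
  intros Hmu Hcvx x y. specialize (Hcvx x y).
  pose proof (pow2_ge_0 (hnorm (hsub x y))). nra.
Qed.

Lemma le_of_le_plus_div_INR (E a b : R) :
  (forall n : nat, (0 < n)%nat -> E <= a + b / INR n) -> E <= a.
Proof.
  intro Hn. apply Rnot_lt_le. intro Hlt.
  destruct (INR_archimed (E - a) (Rabs b)) as [n Hlarge]; [lra|].
  destruct n as [|n]; [simpl in Hlarge; pose proof (Rabs_pos b); lra|].
  specialize (Hn (S n) ltac:(lia)).
  assert (Hpos : 0 < INR (S n)) by (apply lt_0_INR; lia).
  assert (E - a <= b / INR (S n)) by lra.
  apply (Rmult_le_compat_l (INR (S n))) in H; [|lra].
  replace (INR (S n) * (b / INR (S n))) with b in H by (field; lra).
  pose proof (Rle_abs b). lra.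
Qed.

Section SmoothConvex.
Context {V : Hilbert} (L : R) (f : V -> R) (g : V -> V).
Hypotheses (HL : 0 < L) (Hlip : lipschitz_map L g) (Hcvx : mu_convex_grad 0 f g).

Lemma convex_grad_le (z z' : V) : f z + hinner (g z) (hsub z' z) <= f z'.
Proof. specialize (Hcvx z' z). unfold Rdiv in Hcvx. rewrite !Rmult_0_l in Hcvx. lra. Qed.

(* Lipschitz increments of the gradient along the grid x + j h d, j = 0, 1, ...,
   summed up: a discrete substitute for integrating along the segment. *)
Lemma descent_grid (x d : V) (h : R) (Hh : 0 < h) (j : nat) :
  f (hadd x (hscal (INR j * h) d)) - f x - INR j * h * hinner (g x) d
    <= L * hinner d d * h ^ 2 * INR j * (INR j + 1) / 2.
Proof.
  induction j as [|j IH].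
  - assert (E : hadd x (hscal (INR 0 * h) d) = x) by (apply hsub_eq0; hexpand; simpl; ring).
    rewrite E. simpl. lra.
  - set (z := hadd x (hscal (INR j * h) d)) in *.
    set (z' := hadd x (hscal (INR (S j) * h) d)).
    assert (Hjh : 0 < INR (S j) * h) by (apply Rmult_lt_0_compat; [apply lt_0_INR; lia | lra]).
    assert (Hstep : f z' - f z <= h * hinner (g z') d).
    { pose proof (convex_grad_le z' z) as H. revert H.
      unfold z, z'. rewrite S_INR. hexpand. lra. }
    assert (Hgrad : hinner (hsub (g z') (g x)) d <= L * (INR (S j) * h) * hinner d d).
    { apply hinner_le_of_hnorm_le; [nra|].
      assert (Ez : hsub z' x = hscal (INR (S j) * h) d) by (apply hsub_eq0; unfold z'; hexpand; ring).
      rewrite Rmult_assoc, <- (hnorm_scal V _ d) by lra. rewrite <- Ez. apply Hlip. }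
    revert Hgrad. hexpand. rewrite S_INR in *. intro Hgrad.
    pose proof (Rmult_le_compat_l h _ _ (Rlt_le _ _ Hh) Hgrad). nra.
Qed.

Lemma descent_lemma (x d : V) :
  f (hadd x d) <= f x + hinner (g x) d + L / 2 * hinner d d.
Proof.
  enough (f (hadd x d) - f x - hinner (g x) d <= L / 2 * hinner d d) by lra.
  apply (le_of_le_plus_div_INR _ _ (L * hinner d d / 2)).
  intros n Hn. assert (Hn' : 0 < INR n) by (apply lt_0_INR; lia).
  pose proof (descent_grid x d (/ INR n) (Rinv_0_lt_compat _ Hn') n) as H.
  replace (INR n * / INR n) with 1 in H by (field; lra).
  rewrite hscal_1, Rmult_1_l in H.
  replace (L * hinner d d * (/ INR n) ^ 2 * INR n * (INR n + 1) / 2)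
    with (L / 2 * hinner d d + L * hinner d d / 2 / INR n) in H by (field; lra).
  exact H.
Qed.

(* Apply the descent lemma at x along d = -(g x - g y)/L and convexity at (x + d, y). *)
Lemma gradient_cocoercive (x y : V) :
  f x - f y - hinner (g y) (hsub x y) >= / (2 * L) * hnorm (hsub (g x) (g y)) ^ 2.
Proof.
  set (d := hscal (- / L) (hsub (g x) (g y))).
  pose proof (descent_lemma x d) as Hdesc.
  pose proof (convex_grad_le y (hadd x d)) as Hcvx'.
  assert (Hkey : hinner (g x) d + L / 2 * hinner d d - hinner (g y) (hsub (hadd x d) y)
                 = - hinner (g y) (hsub x y) - / (2 * L) * hinner (hsub (g x) (g y)) (hsub (g x) (g y))).
  { unfold d. hexpand. field. lra. }
  rewrite hnorm_sq. lra.
Qed.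

End SmoothConvex.

Lemma telescoping_sum_le (F u : nat -> R) :
  (forall k, F (S k) <= F k - u k) -> forall k, F (S k) + sum_f_R0 u k <= F 0%nat.
Proof.
  intros Hstep k. induction k as [|k IH].
  - simpl. specialize (Hstep 0%nat). lra.
  - rewrite tech5. specialize (Hstep (S k)). lra.
Qed.

Lemma infinite_sum_of_bounded_partial_sums (u : nat -> R) (B : R) :
  (forall i, 0 <= u i) -> (forall k, sum_f_R0 u k <= B) ->
  exists s, infinite_sum u s /\ s <= B.
Proof.
  intros Hu HB.
  destruct (growing_cv (sum_f_R0 u)) as [s Hs].
  - intro n. rewrite tech5. specialize (Hu (S n)). lra.
  - exists B. intros y [n ->]. apply HB.
  - exists s. split; [exact Hs|].
    apply (Rle_cv_lim (Vn := fun _ => B) HB Hs).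
    intros eps Heps. exists 0%nat. intros. unfold Rdist. rewrite Rminus_diag, Rabs_R0. lra.
Qed.

Lemma term_le_sum_f_R0 (u : nat -> R) (k : nat) :
  (forall i, 0 <= u i) -> u k <= sum_f_R0 u k.
Proof.
  intro Hu. destruct k as [|k]; simpl; [lra|].
  pose proof (cond_pos_sum u k Hu). lra.
Qed.

Lemma min_upto_le (u : nat -> R) (k i : nat) : (i <= k)%nat -> min_upto u k <= u i.
Proof.
  induction k as [|k IH]; intro Hi; simpl.
  - replace i with 0%nat by lia. lra.
  - destruct (Nat.eq_dec i (S k)) as [->|Hne]; [apply Rmin_r|].
    eapply Rle_trans; [apply Rmin_l | apply IH; lia].
Qed.

Lemma min_upto_le_div_sum (w u : nat -> R) (B : R) (k : nat) :
  (forall i, 0 < w i) -> sum_f_R0 (fun i => w i * u i) k <= B ->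
  min_upto u k <= B / sum_f_R0 w k.
Proof.
  intros Hw HB.
  assert (Hpos : 0 < sum_f_R0 w k) by (apply tech1; auto).
  assert (Hmin : min_upto u k * sum_f_R0 w k <= sum_f_R0 (fun i => w i * u i) k).
  { rewrite scal_sum. apply sum_Rle. intros i Hi.
    apply Rmult_le_compat_l; [apply Rlt_le, Hw | apply min_upto_le, Hi]. }
  apply (Rmult_le_reg_r (sum_f_R0 w k)); [exact Hpos|].
  unfold Rdiv. rewrite Rmult_assoc, Rinv_l by lra. lra.
Qed.

Definition hnag_lyapunov {V : Hilbert} (f : V -> R) (y : V) (s : V * V * R) : R :=
  let '(x, v, gam) := s in f x - f y + gam / 2 * hnorm (hsub v y) ^ 2.

Section HnagStep.
Context {V : Hilbert} (mu L : R) (f : V -> R) (g : V -> V).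
Hypotheses (Hmu : 0 <= mu) (HL : 0 < L) (Hlip : lipschitz_map L g)
  (Hcvx : mu_convex_grad mu f g).

(* The Lyapunov defect is the sum of four nonnegative terms: alpha times the
   mu-convexity gap at (y, x'), the cocoercivity gap at (x, x'), and the squares
   |alpha g x' + gam (v' - v)|^2 / (2 gam) and mu alpha / 2 |x' - v'|^2; this is
   an exact identity once gam = L alpha^2 is substituted. *)
Lemma hnag_step_lyapunov_le (y x v : V) (gam : R) (Hgam : 0 < gam) :
  (1 + sqrt (gam / L)) * hnag_lyapunov f y (hnag_step g mu L (x, v, gam))
    <= hnag_lyapunov f y (x, v, gam) - / (2 * L) * hnorm (g x) ^ 2.
Proof.
  unfold hnag_step, hnag_lyapunov.
  set (alpha := sqrt (gam / L)).
  set (x' := hscal (/ (1 + alpha))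
               (hadd (hadd x (hscal alpha v)) (hscal (- (alpha * (1 / (L * alpha)))) (g x)))).
  set (v' := hscal (/ (gam + mu * alpha))
               (hadd (hadd (hscal gam v) (hscal (mu * alpha) x')) (hscal (- alpha) (g x')))).
  assert (Halpha : 0 < alpha) by (apply sqrt_lt_R0, Rdiv_lt_0_compat; lra).
  assert (Hgam_alpha : gam = L * alpha * alpha).
  { unfold alpha. rewrite Rmult_assoc, sqrt_sqrt; [field; lra | left; apply Rdiv_lt_0_compat; lra]. }
  pose proof (Hcvx y x') as Hconv.
  pose proof (gradient_cocoercive L f g HL Hlip (mu_convex_grad_0 _ mu f g Hmu Hcvx) x x') as Hcoco.
  pose proof (hinner_pos V (hadd (hscal alpha (g x')) (hscal gam (hsub v' v)))) as Hsq1.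
  pose proof (hinner_pos V (hsub x' v')) as Hsq2.
  rewrite !hnorm_sq in *. apply Rge_le in Hconv, Hcoco.
  set (s1 := f y - f x' - hinner (g x') (hsub y x') - mu / 2 * hinner (hsub y x') (hsub y x')).
  set (s2 := f x - f x' - hinner (g x') (hsub x x') - / (2 * L) * hinner (hsub (g x) (g x')) (hsub (g x) (g x'))).
  set (s3 := hinner (hadd (hscal alpha (g x')) (hscal gam (hsub v' v)))
                    (hadd (hscal alpha (g x')) (hscal gam (hsub v' v)))) in *.
  set (s4 := hinner (hsub x' v') (hsub x' v')) in *.
  assert (K1 : 0 <= alpha * s1) by (apply Rmult_le_pos; unfold s1; lra).
  assert (K2 : 0 <= s3 / (2 * gam)) by (apply Rmult_le_pos; [lra | left; apply Rinv_0_lt_compat; lra]).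
  assert (K3 : 0 <= mu * alpha / 2 * s4) by (apply Rmult_le_pos; [|lra]; nra).
  enough (E : f x - f y + gam / 2 * hinner (hsub v y) (hsub v y) - / (2 * L) * hinner (g x) (g x)
    - (1 + alpha) * (f x' - f y + (gam + mu * alpha) / (1 + alpha) / 2 * hinner (hsub v' y) (hsub v' y))
    = alpha * s1 + s2 + s3 / (2 * gam) + mu * alpha / 2 * s4) by (unfold s2 in *; lra).
  clear Hconv Hcoco K1 K2 K3 Hsq1 Hsq2.
  unfold s1, s2, s3, s4, v', x'. clearbody alpha. subst gam.
  hexpand.
  assert (0 < L * alpha * alpha + mu * alpha) by nra.
  field. repeat split; lra.
Qed.

End HnagStep.

Section HnagIterates.
Context {V : Hilbert} (mu L : R) (f : V -> R) (g : V -> V) (gamma0 : R) (x0 v0 xstar : V).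
Hypotheses (Hmu : 0 <= mu) (HL : 0 < L) (Hlip : lipschitz_map L g)
  (Hcvx : mu_convex_grad mu f g) (Hmin : forall x : V, f xstar <= f x) (Hgamma0 : 0 < gamma0).

Lemma hnag_gamma_pos (k : nat) : 0 < hnag_gamma g mu L gamma0 x0 v0 k.
Proof.
  induction k as [|k IH]; [exact Hgamma0|].
  unfold hnag_gamma in *. simpl.
  destruct (hnag g mu L gamma0 x0 v0 k) as [[xk vk] gk]. simpl in *.
  assert (0 < sqrt (gk / L)) by (apply sqrt_lt_R0, Rdiv_lt_0_compat; lra).
  apply Rdiv_lt_0_compat; nra.
Qed.

Lemma hnag_alpha_pos (k : nat) : 0 < hnag_alpha g mu L gamma0 x0 v0 k.
Proof. apply sqrt_lt_R0, Rdiv_lt_0_compat; [apply hnag_gamma_pos | exact HL]. Qed.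

Lemma hnag_lambda_pos (k : nat) : 0 < hnag_lambda g mu L gamma0 x0 v0 k.
Proof.
  induction k as [|k IH]; simpl; [lra|].
  pose proof (hnag_alpha_pos k). apply Rdiv_lt_0_compat; lra.
Qed.

Lemma hnag_lyapunov_nonneg (k : nat) : 0 <= hnag_lyapunov f xstar (hnag g mu L gamma0 x0 v0 k).
Proof.
  pose proof (hnag_gamma_pos k) as Hgam. unfold hnag_gamma in Hgam.
  destruct (hnag g mu L gamma0 x0 v0 k) as [[xk vk] gk]. simpl in *.
  pose proof (Hmin xk). pose proof (pow2_ge_0 (hnorm (hsub vk xstar))). nra.
Qed.

Lemma hnag_lyapunov_decrease (k : nat) :
  let E := fun k => hnag_lyapunov f xstar (hnag g mu L gamma0 x0 v0 k) in
  (1 + hnag_alpha g mu L gamma0 x0 v0 k) * E (S k)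
    <= E k - / (2 * L) * hnorm (g (hnag_x g mu L gamma0 x0 v0 k)) ^ 2.
Proof.
  pose proof (hnag_gamma_pos k) as Hgam.
  unfold hnag_alpha, hnag_x, hnag_gamma in *. simpl.
  destruct (hnag g mu L gamma0 x0 v0 k) as [[xk vk] gk]. simpl in *.
  exact (hnag_step_lyapunov_le mu L f g Hmu HL Hlip Hcvx xstar xk vk gk Hgam).
Qed.

Lemma hnag_weighted_gradient_sum_le (k : nat) :
  sum_f_R0 (fun i => / hnag_lambda g mu L gamma0 x0 v0 i
                      * hnorm (g (hnag_x g mu L gamma0 x0 v0 i)) ^ 2) k
    <= 2 * L * hnag_lyapunov f xstar (x0, v0, gamma0).
Proof.
  set (lam := hnag_lambda g mu L gamma0 x0 v0).
  set (E := fun i => hnag_lyapunov f xstar (hnag g mu L gamma0 x0 v0 i)).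
  set (u := fun i => / lam i * hnorm (g (hnag_x g mu L gamma0 x0 v0 i)) ^ 2).
  assert (Hdecr : forall i, E (S i) / lam (S i) <= E i / lam i - / (2 * L) * u i).
  { intro i. pose proof (hnag_lyapunov_decrease i) as H. cbv zeta in H. fold E in H.
    pose proof (hnag_lambda_pos i) as Hlam. fold lam in Hlam.
    pose proof (hnag_alpha_pos i) as Halpha. unfold u.
    set (a := hnag_alpha g mu L gamma0 x0 v0 i) in *.
    set (q := hnorm (g (hnag_x g mu L gamma0 x0 v0 i)) ^ 2) in *.
    change (lam (S i)) with (lam i / (1 + a)).
    replace (E (S i) / (lam i / (1 + a))) with ((1 + a) * E (S i) / lam i) by (field; lra).
    replace (E i / lam i - / (2 * L) * (/ lam i * q)) with ((E i - / (2 * L) * q) / lam i)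
      by (field; lra).
    apply Rmult_le_compat_r; [apply Rlt_le, Rinv_0_lt_compat | exact H]; lra. }
  pose proof (telescoping_sum_le _ _ Hdecr k) as Htel.
  replace (sum_f_R0 (fun i => / (2 * L) * u i) k) with (/ (2 * L) * sum_f_R0 u k) in Htel
    by (rewrite scal_sum; apply sum_eq; intros; ring).
  change (E 0%nat / lam 0%nat) with (hnag_lyapunov f xstar (x0, v0, gamma0) / 1) in Htel.
  rewrite Rdiv_1_r in Htel.
  assert (HE : 0 <= E (S k) / lam (S k))
    by (apply Rmult_le_pos; [apply hnag_lyapunov_nonneg | apply Rlt_le, Rinv_0_lt_compat, hnag_lambda_pos]).
  fold u. apply (Rmult_le_reg_l (/ (2 * L))); [apply Rinv_0_lt_compat; lra|].
  rewrite <- Rmult_assoc, Rinv_l, Rmult_1_l by lra. lra.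
Qed.

End HnagIterates.

Theorem mainTheorem5 (V : Hilbert) (mu L : R) (f : V -> R) (g : V -> V)
  (gamma0 : R) (x0 v0 xstar : V)
  (Hmu : 0 <= mu) (HL : 0 < L) (Hf : S11 mu L f g)
  (Hmin : forall x : V, f xstar <= f x) (Hgamma0 : 0 < gamma0) :
  let x := hnag_x g mu L gamma0 x0 v0 in
  let lam := hnag_lambda g mu L gamma0 x0 v0 in
  let L0 := f x0 - f xstar + gamma0 / 2 * (hnorm (hsub v0 xstar)) ^ 2 in
  (exists s, infinite_sum (fun i => / lam i * (hnorm (g (x i))) ^ 2) s
             /\ s <= 2 * L * L0) /\
  (forall k : nat,
     min_upto (fun i => (hnorm (g (x i))) ^ 2) k
       <= 2 * L * L0 / sum_f_R0 (fun i => / lam i) k) /\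
  (forall k : nat, (hnorm (g (x k))) ^ 2 <= 2 * L * L0 * lam k).
Proof.
  destruct Hf as [_ [_ [Hlip Hcvx]]].
  intros x lam L0.
  pose proof (hnag_weighted_gradient_sum_le mu L f g gamma0 x0 v0 xstar
                Hmu HL Hlip Hcvx Hmin Hgamma0) as Hsum.
  change (hnag_lyapunov f xstar (x0, v0, gamma0)) with L0 in Hsum. fold x lam in Hsum.
  pose proof (hnag_lambda_pos mu L g gamma0 x0 v0 Hmu HL Hgamma0) as Hlam.
  assert (Hw : forall i, 0 < / lam i) by (intro i; apply Rinv_0_lt_compat, Hlam).
  assert (Hu : forall i, 0 <= / lam i * hnorm (g (x i)) ^ 2)
    by (intro i; apply Rmult_le_pos; [apply Rlt_le, Hw | apply pow2_ge_0]).
  split; [|split].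
  - exact (infinite_sum_of_bounded_partial_sums _ _ Hu Hsum).
  - intro k. exact (min_upto_le_div_sum _ _ _ k Hw (Hsum k)).
  - intro k. pose proof (Rle_trans _ _ _ (term_le_sum_f_R0 _ k Hu) (Hsum k)) as Hk.
    apply (Rmult_le_compat_l (lam k)) in Hk; [|apply Rlt_le, Hlam].
    rewrite <- Rmult_assoc, Rinv_r, Rmult_1_l in Hk by (apply Rgt_not_eq, Hlam).
    lra.
Qed.
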